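(* Let $0<\alpha \leq \beta \leq d$, let $Q_0\subset\mathbb{R}^d$ be a cube, and suppose $u \in BMO^\alpha(Q_0)$. Then $u \in BMO^\beta(Q_0)$ and $$\|u\|_{BMO^\beta(Q_0)} \leq C\|u\|_{BMO^\alpha(Q_0)}$$ for a constant $C=C(\alpha,\beta)>0$ independent of $u$.
   Context: For $\gamma\in(0,d]$: $\mathcal{H}^{\gamma}_{\infty}(E)= \inf \{\sum_{i} \omega_\gamma r_i^\gamma : E \subset \bigcup_{i} B(x_i,r_i) \}$, $\omega_\gamma= \pi^{\gamma/2}/\Gamma(\gamma/2+1)$. $f$ is $\mathcal{H}^\gamma_\infty$-quasicontinuous if for every $\epsilon>0$ there is an open $O$ with $\mathcal{H}^\gamma_\infty(O)<\epsilon$ and $f|_{O^c}$ continuous. Choquet integral: $\int_A f\,d\mathcal{H}^\gamma_\infty=\int_0^\infty \mathcal{H}^\gamma_\infty(\{x\in A: f(x)>t\})\,dt$ for $f\ge0$. $L^1(Q_0;\mathcal{H}^\gamma_\infty)$: quasicontinuous $f$ with $\int_{Q_0}|f|\,d\mathcal{H}^\gamma_\infty<\infty$. $\|u\|_{BMO^{\gamma}(Q_0)}= \sup_{Q} \inf_{c \in \mathbb{R}} l(Q)^{-\gamma} \int_{Q} |u-c| \,d\mathcal{H}^{\gamma}_\infty$ over finite subcubes $Q\subset Q_0$ with sides parallel to those of $Q_0$, $l(Q)$ = side length; $BMO^\gamma(Q_0)$ is the set of $u\in L^1(Q_0;\mathcal{H}^\gamma_\infty)$ with this finite. *)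

From HB Require Import structures.
From mathcomp Require Import all_boot all_order all_algebra.
From mathcomp Require Import all_classical all_reals all_analysis.
Set Implicit Arguments. Unset Strict Implicit. Unset Printing Implicit Defensive.
Import Order.TTheory GRing.Theory Num.Theory.
Import numFieldNormedType.Exports.
Local Open Scope classical_set_scope.
Local Open Scope ring_scope.

Section HausdorffBMO.
Variables (R : realType) (d : nat).
Notation pt := 'rV[R]_d.

Definition edist (x y : pt) : R :=
  Num.sqrt (\sum_(i < d) (x ord0 i - y ord0 i) ^+ 2).
Definition eball (x : pt) (r : R) : set pt := [set y | edist x y < r].

Definition Gamma (s : R) : R :=
  fine (\int[@lebesgue_measure R]_(t in `]0%R, +oo[%classic)
          ((t `^ (s - 1)) * expR (- t))%:E)%E.

Definition omega (g : R) : R := pi `^ (g / 2) / Gamma (g / 2 + 1).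

(* gamma-dimensional Hausdorff content (countable covers by balls;
   finite covers are included via zero radii) *)
Definition hcontent (g : R) (E : set pt) : \bar R :=
  ereal_inf [set S | exists (x : nat -> pt) (r : nat -> R),
    (forall i, 0 <= r i) /\ E `<=` \bigcup_i eball (x i) (r i) /\
    S = (\sum_(0 <= i <oo) (omega g * r i `^ g)%:E)%E].

Definition choquet (g : R) (A : set pt) (f : pt -> R) : \bar R :=
  (\int[@lebesgue_measure R]_(t in `[0%R, +oo[%classic)
      hcontent g [set x | A x /\ (t < f x)%R])%E.

Definition quasicont (g : R) (D : set pt) (f : pt -> R) : Prop :=
  forall e : R, 0 < e -> exists O : set pt,
    open O /\ (hcontent g O < e%:E)%E /\ {within D `\` O, continuous f}.

Definition L1H (g : R) (D : set pt) (f : pt -> R) : Prop :=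
  quasicont g D f /\ (choquet g D (fun x => `|f x|%R) < +oo)%E.

Definition cube (a : pt) (l : R) : set pt :=
  [set x | forall i : 'I_d, a ord0 i <= x ord0 i <= a ord0 i + l].

Definition bmo_norm (g : R) (Q0 : set pt) (u : pt -> R) : \bar R :=
  ereal_sup [set s | exists (a : pt) (l : R), 0 < l /\ cube a l `<=` Q0 /\
    s = ereal_inf [set v | exists c : R,
          v = ((l `^ (- g))%:E * choquet g (cube a l) (fun x => `|u x - c|%R))%E]].

Definition BMO (g : R) (Q0 : set pt) (u : pt -> R) : Prop :=
  L1H g Q0 u /\ (bmo_norm g Q0 u < +oo)%E.

End HausdorffBMO.

(* Let E lie in a ball of radius rho.  If a cover of E by balls contains a
   ball of radius at least rho, the single ball of radius rho is a cheaper
   cover; for radii r <= rho one has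
   omega_beta r^beta <= (omega_beta / omega_alpha) rho^(beta - alpha) omega_alpha r^alpha.
   Hence H^beta(E) <= (omega_beta / omega_alpha) rho^(beta - alpha) H^alpha(E),
   and integrating over the level sets gives the same bound for Choquet
   integrals.  A cube of side l lies in a ball of radius comparable to l, and
   the factor l^(beta - alpha) is absorbed by the normalisations l^-beta and
   l^-alpha of the two BMO seminorms.  Quasicontinuity transfers because the
   exceptional open sets may be cut down to a ball containing Q0.  The
   constants omega_gamma are positive since Gamma(s) > 0 for s >= 1: the
   Gamma integral lies between e^-2 and a multiple of the integral of
   e^(-t/2). *)

From Pilot Require Import Defs.
From HB Require Import structures.
From mathcomp Require Import all_boot all_order all_algebra.
From mathcomp Require Import all_classical all_reals all_analysis.
From mathcomp Require Import ring lra.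
From mathcomp Require Import measurable_realfun exponential_distribution.
Set Implicit Arguments. Unset Strict Implicit. Unset Printing Implicit Defensive.
Import Order.TTheory GRing.Theory Num.Theory.
Import numFieldNormedType.Exports.
Local Open Scope classical_set_scope.
Local Open Scope ring_scope.

Section GammaIntegrand.
Variable R : realType.

Lemma powR_le1Dexpr (p t : R) (n : nat) : 0 <= p -> p <= n%:R -> 0 <= t ->
  t `^ p <= 1 + t ^+ n.
Proof.
move=> p0 pn t0; have [t1|t1] := leP t 1.
  apply: le_trans (_ : 1 <= _); last by rewrite lerDl exprn_ge0.
  by have := @ge0_ler_powR R p p0 t 1; rewrite !nnegrE powR1 => ->.
rewrite -powR_mulrn//; apply: le_trans (_ : t `^ n%:R <= _); last by rewrite lerDr.
by apply: ler_powR => //; exact: ltW.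
Qed.

Lemma exprS_le_expR_half (t : R) (n : nat) : 0 <= t ->
  t ^+ n.+1 <= 2 ^+ n.+1 * n.+1`!%:R * expR (t / 2).
Proof.
move=> t0; have fact_gt0 : 0 < n.+1`!%:R :> R by rewrite ltr0n fact_gt0.
have : (t / 2) ^+ n.+1 / n.+1`!%:R <= expR (t / 2).
  by apply: le_trans (expR_ge1Dxn n (divr_ge0 t0 (ler0n R 2))); rewrite lerDr.
rewrite expr_div_n !ler_pdivrMr ?exprn_gt0// => /le_trans; apply.
by rewrite mulrC [expR _ * _]mulrC mulrA.
Qed.

Lemma Gamma_integrand_bounded (p : R) : 0 <= p ->
  exists2 M : R, 0 < M & forall t, 0 <= t ->
    t `^ p * expR (- t) <= M * expR (- (t / 2)).
Proof.
move=> p0; set n := Num.truncn p.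
have pn : p <= n.+1%:R by apply/ltW; exact: truncnS_gt.
exists (1 + 2 ^+ n.+1 * n.+1`!%:R); first by rewrite ltr_pwDl// mulr_ge0// exprn_ge0.
move=> t t0.
have halfE : expR (t / 2) * expR (- t) = expR (- (t / 2)).
  by rewrite -expRD; congr expR; field.
have exp_half : expR (- t) <= expR (- (t / 2)) by rewrite ler_expR; lra.
apply: le_trans (_ : (1 + 2 ^+ n.+1 * n.+1`!%:R * expR (t / 2)) * expR (- t) <= _).
  rewrite ler_wpM2r ?expR_ge0//; apply: le_trans (powR_le1Dexpr p0 pn t0) _.
  by rewrite lerD2l exprS_le_expR_half.
by rewrite mulrDl mul1r -mulrA halfE mulrDl mul1r lerD2r.
Qed.

End GammaIntegrand.

Section GammaIntegral.
Variables (R : realType) (p : R).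
Hypothesis p0 : 0 <= p.
Notation mu := (@lebesgue_measure R).

Lemma measurable_Gamma_integrand (D : set R) : measurable D ->
  measurable_fun D (fun t : R => (t `^ p * expR (- t))%:E).
Proof.
move=> mD; apply: measurable_funS (_ : measurable_fun setT _) => //.
apply/measurable_EFinP; apply: measurable_funM; first exact: measurable_powR.
by apply: measurableT_comp => //; exact: oppr_measurable.
Qed.

Let integrand_ge0 (t : R) : (0 <= (t `^ p * expR (- t))%:E)%E.
Proof. by rewrite lee_fin mulr_ge0 ?powR_ge0 ?expR_ge0. Qed.

Lemma Gamma_integral_ge :
  ((expR (-2))%:E <= \int[mu]_(t in `]0%R, +oo[%classic) (t `^ p * expR (- t))%:E)%E.
Proof.
apply: (@le_trans _ _ (\int[mu]_(t in `[1%R, 2%R]%classic) (expR (-2))%:E)%E).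
  rewrite integral_cst//= lebesgue_measure_itv/= lte_fin ltr1n -EFinD.
  by rewrite -EFinM lee_fin; lra.
apply: (@le_trans _ _ (\int[mu]_(t in `[1%R, 2%R]%classic) (t `^ p * expR (- t))%:E)%E).
  apply: ge0_le_integral => //; first exact: measurable_Gamma_integrand.
  move=> t; rewrite /= in_itv/= => /andP[t1 t2]; rewrite lee_fin.
  rewrite -[expR (-2)]mul1r; apply: ler_pM; rewrite ?ler01 ?expR_ge0//.
    have := @ge0_ler_powR R _ p0 1 t; rewrite !nnegrE powR1; apply => //.
    exact: le_trans t1.
  by rewrite ler_expR lerN2.
apply: ge0_subset_integral => //; first exact: measurable_Gamma_integrand.
by apply: subset_itv; rewrite bnd_simp.
Qed.

Lemma Gamma_integral_lt_pinfty :
  (\int[mu]_(t in `]0%R, +oo[%classic) (t `^ p * expR (- t))%:E < +oo)%E.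
Proof.
have [M M0 bound] := Gamma_integrand_bounded p0.
have M2_ge0 : 0 <= 2 * M by rewrite mulr_ge0// ltW.
apply: le_lt_trans (_ : _ <= (2 * M)%:E)%E (ltry _).
have pdf0 t : (0 <= (exponential_pdf (2^-1 : R) t)%:E)%E.
  by rewrite lee_fin exponential_pdf_ge0// invr_ge0.
have mpdf : measurable_fun setT (EFin \o exponential_pdf (2^-1 : R)).
  by apply/measurable_EFinP; exact: measurable_exponential_pdf.
apply: (@le_trans _ _ (\int[mu]_(t in `]0%R, +oo[%classic)
                         ((2 * M)%:E * (exponential_pdf (2^-1) t)%:E))%E).
  apply: ge0_le_integral => //; first exact: measurable_Gamma_integrand.
    apply/measurable_EFinP => /=; apply: measurable_funM => //.
    exact: measurable_funS (measurable_exponential_pdf _).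
  move=> t; rewrite /= in_itv/= andbT => t0.
  rewrite exponential_pdfE; last exact: ltW.
  rewrite -[X in (_ <= X)%E]EFinM lee_fin.
  have -> : 2 * M * (2^-1 * expR (- 2^-1 * t)) = M * expR (- (t / 2)).
    by rewrite mulNr (mulrC _ t); field.
  exact: bound (ltW t0).
rewrite ge0_integralZl_EFin//; last exact: measurable_funS mpdf.
rewrite -[X in (_ <= X)%E]mule1 lee_wpmul2l ?lee_fin//.
rewrite -(@integral_exponential_pdf R (2^-1)) ?invr_gt0//.
exact: ge0_subset_integral.
Qed.

End GammaIntegral.

Lemma Gamma_gt0 (R : realType) (s : R) : 1 <= s -> 0 < Gamma s.
Proof.
move=> s1; have p0 : 0 <= s - 1 by rewrite subr_ge0.
move: (Gamma_integral_ge p0) (Gamma_integral_lt_pinfty p0); rewrite /Gamma.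
case: (\int[_]_(_ in _) _)%E => [r| |]//= + _; rewrite lee_fin.
by apply: lt_le_trans; exact: expR_gt0.
Qed.

Lemma powR_le_mulpowR (R : realType) (a b r s : R) : 0 < a -> a <= b -> 0 <= s <= r ->
  s `^ b <= r `^ (b - a) * s `^ a.
Proof.
move=> a0 ab /andP[s0 sr].
have [->|s_neq0] := eqVneq s 0.
  by rewrite powR0 ?mulr_ge0 ?powR_ge0// lt0r_neq0// (lt_le_trans a0).
have -> : s `^ b = s `^ (b - a) * s `^ a by rewrite -powRD ?subrK// s_neq0 implybT.
apply: ler_wpM2r; first exact: powR_ge0.
by rewrite ge0_ler_powR ?subr_ge0// nnegrE (le_trans s0).
Qed.

Section HausdorffContent.
Variables (R : realType) (d : nat).
Notation pt := 'rV[R]_d.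
Implicit Types (a b g r s : R) (E F : set pt).

Lemma omega_gt0 g : 0 < g -> 0 < omega g.
Proof.
move=> g0; rewrite /omega divr_gt0 ?powR_gt0 ?pi_gt0//.
by apply: Gamma_gt0; rewrite lerDr divr_ge0// ltW.
Qed.

Definition hcontent_ratio a b r : R := omega b / omega a * r `^ (b - a).

Lemma hcontent_ratio_gt0 a b r : 0 < a -> a <= b -> 0 < r -> 0 < hcontent_ratio a b r.
Proof.
move=> a0 ab r0; apply: mulr_gt0; last exact: powR_gt0.
by apply: divr_gt0; apply: omega_gt0 => //; exact: lt_le_trans ab.
Qed.

Lemma hcontent_ratioE a b r x : 0 < a ->
  hcontent_ratio a b r * (omega a * x) = omega b * (r `^ (b - a) * x).
Proof. by move=> a0; rewrite /hcontent_ratio; field; rewrite lt0r_neq0// omega_gt0. Qed.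

Lemma hcontent_ratioM a b r s : 0 <= r -> 0 <= s ->
  hcontent_ratio a b (r * s) = r `^ (b - a) * hcontent_ratio a b s.
Proof. by move=> r0 s0; rewrite /hcontent_ratio powRM//; ring. Qed.

Lemma omega_powR_le_ratio a b r s : 0 < a -> a <= b -> 0 <= s <= r ->
  omega b * s `^ b <= hcontent_ratio a b r * (omega a * s `^ a).
Proof.
move=> a0 ab sr; rewrite hcontent_ratioE//; apply: ler_wpM2l; last exact: powR_le_mulpowR.
by rewrite ltW// omega_gt0// (lt_le_trans a0).
Qed.

Lemma hcontent_ge0 g E : 0 < g -> (0 <= hcontent g E)%E.
Proof.
move=> g0; apply: le_ereal_inf_tmp => _ [x [r [r0 [_ ->]]]].
by apply: nneseries_ge0 => i _ _; rewrite lee_fin mulr_ge0 ?powR_ge0// ltW// omega_gt0.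
Qed.

Lemma le_hcontent g E F : E `<=` F -> (hcontent g E <= hcontent g F)%E.
Proof.
move=> EF; apply: ereal_inf_le_tmp => _ [x [r [r0 [cov ->]]]].
by exists x, r; split => //; split => //; exact: subset_trans cov.
Qed.

Lemma hcontent_le_cover g E (x : nat -> pt) (r : nat -> R) :
  (forall i, 0 <= r i) -> E `<=` \bigcup_i eball (x i) (r i) ->
  (hcontent g E <= \sum_(0 <= i <oo) (omega g * r i `^ g)%:E)%E.
Proof. by move=> r0 cov; apply: ereal_inf_lbound; exists x, r. Qed.

Lemma hcontent_le_ball g E x0 r : 0 < g -> 0 <= r -> E `<=` eball x0 r ->
  (hcontent g E <= (omega g * r `^ g)%:E)%E.
Proof.
move=> g0 r0 EB; pose rr i := if i == 0%N then r else 0.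
have rr0 i : 0 <= rr i by case: i.
apply: le_trans (@hcontent_le_cover g E (fun=> x0) rr rr0 _) _.
  by move=> y Ey; exists 0%N => //; exact: EB.
rewrite (@nneseries_split _ _ 0 1); last first.
  by move=> k _; rewrite lee_fin mulr_ge0 ?powR_ge0// ltW// omega_gt0.
rewrite add0n big_nat1 eseries0 ?adde0// => -[|i]// _ _.
by rewrite /rr /= powR0 ?mulr0// lt0r_neq0.
Qed.

Section ComparisonOfDimensions.
Variables (a b : R).
Hypotheses (a0 : 0 < a) (ab : a <= b).

Let b0 : 0 < b := lt_le_trans a0 ab.

Lemma hcontent_le_ratio_cover E x0 r (x : nat -> pt) (rr : nat -> R) :
  0 < r -> E `<=` eball x0 r ->
  (forall i, 0 <= rr i) -> E `<=` \bigcup_i eball (x i) (rr i) ->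
  (hcontent b E <= (hcontent_ratio a b r)%:E *
                    \sum_(0 <= i <oo) (omega a * rr i `^ a)%:E)%E.
Proof.
move=> r0 EB rr0 cov.
have K0 := hcontent_ratio_gt0 a0 ab r0.
have term_ge0 g i : 0 < g -> (0 <= (omega g * rr i `^ g)%:E)%E.
  by move=> g0; rewrite lee_fin mulr_ge0 ?powR_ge0// ltW// omega_gt0.
have [[i r_le]|small] := pselect (exists i, r <= rr i).
  apply: le_trans (hcontent_le_ball b0 (ltW r0) EB) _.
  apply: le_trans (_ : (hcontent_ratio a b r * (omega a * rr i `^ a))%:E <= _)%E.
    have r_in : 0 <= r <= r by rewrite lexx ltW.
    rewrite lee_fin; apply: le_trans (omega_powR_le_ratio a0 ab r_in) _.
    apply: ler_wpM2l; first exact: ltW.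
    apply: ler_wpM2l; first by rewrite ltW// omega_gt0.
    by rewrite ge0_ler_powR// ?nnegrE ?rr0 ?(ltW a0) ?(ltW r0).
  rewrite EFinM lee_wpmul2l ?lee_fin ?(ltW K0)//.
  apply: le_trans (nneseries_lim_ge i.+1 (fun n _ _ => term_ge0 a n a0)).
  by rewrite big_nat_recr//= leeDr// sume_ge0// => n _; exact: term_ge0.
apply: le_trans (hcontent_le_cover b rr0 cov) _.
rewrite -nneseriesZl => [|i _]; last exact: term_ge0.
apply: lee_nneseries => [i _ _|i _]; first exact: term_ge0.
rewrite lee_fin omega_powR_le_ratio// rr0/=.
by rewrite leNgt; apply/negP => lt_r; apply: small; exists i; exact: ltW.
Qed.

Lemma hcontent_le_ratio E x0 r : 0 < r -> E `<=` eball x0 r ->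
  (hcontent b E <= (hcontent_ratio a b r)%:E * hcontent a E)%E.
Proof.
move=> r0 EB; have K0 := hcontent_ratio_gt0 a0 ab r0.
rewrite -lee_pdivrMl//; apply: le_ereal_inf_tmp => _ [x [rr [rr0 [cov ->]]]].
by rewrite lee_pdivrMl//; exact: hcontent_le_ratio_cover r0 EB rr0 cov.
Qed.

End ComparisonOfDimensions.

End HausdorffContent.

Lemma nonincreasing_emeasurable (R : realType) (D : set R) (h : R -> \bar R) :
  measurable D -> (forall x y, x <= y -> (h y <= h x)%E) -> measurable_fun D h.
Proof.
move=> mD h_ni; apply: (measurability _ (ErealGenOInfty.measurableE R)) => //.
move=> /= _ [_ [r ->] <-]; apply: measurableI => //.
apply: is_interval_measurable => x y /= hx hy z /andP[xz zy].
move: hx hy; rewrite !in_itv/= !andbT => hx hy.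
exact: lt_le_trans hy (h_ni _ _ zy).
Qed.

Section Choquet.
Variables (R : realType) (d : nat).
Notation pt := 'rV[R]_d.

Lemma choquet_le_ratio (a b : R) (A : set pt) (f : pt -> R) x0 r :
  0 < a -> a <= b -> 0 < r -> A `<=` eball x0 r ->
  (choquet b A f <= (hcontent_ratio a b r)%:E * choquet a A f)%E.
Proof.
move=> a0 ab r0 AB; have b0 := lt_le_trans a0 ab.
have K0 := hcontent_ratio_gt0 a0 ab r0.
have level_ni (g x y : R) : x <= y ->
    (hcontent g [set z | A z /\ (y < f z)%R] <= hcontent g [set z | A z /\ (x < f z)%R])%E.
  by move=> xy; apply: le_hcontent => z [Az yz]; split => //; exact: le_lt_trans yz.
have level_meas (g : R) (D : set R) : measurable D ->
    measurable_fun D (fun t => hcontent g [set z | A z /\ (t < f z)%R]).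
  by move=> mD; apply: nonincreasing_emeasurable => //; exact: level_ni.
rewrite /choquet -ge0_integralZl_EFin//; last 3 first.
- by move=> t _; exact: hcontent_ge0.
- exact: level_meas.
- exact: ltW.
apply: ge0_le_integral => //.
- by move=> t _; exact: hcontent_ge0.
- exact: level_meas.
- apply: nonincreasing_emeasurable => // x y xy.
  by rewrite lee_wpmul2l ?lee_fin ?(ltW K0)// level_ni.
by move=> t _; apply: (hcontent_le_ratio a0 ab r0) => z [Az _]; exact: AB.
Qed.

End Choquet.

Section CubesAndBalls.
Variables (R : realType) (d : nat).
Notation pt := 'rV[R]_d.

Lemma edist_lt_coord (x y : pt) (m : R) : 0 < m ->
  (forall i : 'I_d, `|x ord0 i - y ord0 i| <= m) -> Defs.edist x y < m * (d%:R + 1).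
Proof.
move=> m0 xy; have p0 : 0 < m * (d%:R + 1) by rewrite mulr_gt0// ltr_wpDl.
rewrite /Defs.edist -[ltRHS]ger0_norm ?(ltW p0)// -sqrtr_sqr ltr_sqrt ?exprn_gt0//.
apply: (@le_lt_trans _ _ (\sum_(i < d) m ^+ 2)).
  by apply: ler_sum => i _; have := xy i; rewrite ler_norml => /andP[? ?]; nra.
rewrite sumr_const card_ord -[_ *+ d]mulr_natr exprMn ltr_pM2l ?exprn_gt0//.
have : 0 <= d%:R :> R by []; nra.
Qed.

Lemma ball_sub_eball (x : pt) (r : R) : 0 < r -> ball x r `<=` eball x (r * (d%:R + 1)).
Proof. by move=> r0 y [_ xy]; apply: edist_lt_coord => // i; exact/ltW/xy. Qed.

Lemma cube_sub_ball (x : pt) (l : R) : 0 < l -> cube x l `<=` ball x (2 * l).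
Proof.
move=> l0 y Qy; split; first by rewrite mulr_gt0.
move=> i j; rewrite (ord1 i) /ball /=.
have /andP[lo hi] := Qy j; rewrite distrC ger0_norm ?subr_ge0//; lra.
Qed.

Lemma cube_sub_eball (x : pt) (l : R) : 0 < l -> cube x l `<=` eball x (l * (2 * (d%:R + 1))).
Proof.
move=> l0; have l2 : 0 < 2 * l by rewrite mulr_gt0.
by move=> y /(cube_sub_ball l0) /(ball_sub_eball l2); rewrite mulrCA mulrA.
Qed.

End CubesAndBalls.

Section BMOEmbedding.
Variables (R : realType) (d : nat) (a b : R).
Hypotheses (a0 : 0 < a) (ab : a <= b).
Notation pt := 'rV[R]_d.

Lemma quasicont_le_dim (D : set pt) (f : pt -> R) x r : 0 < r -> D `<=` ball x r ->
  quasicont a D f -> quasicont b D f.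
Proof.
move=> r0 Dx qcf e e0.
have rd0 : 0 < r * (d%:R + 1) by rewrite mulr_gt0 ?ltr_wpDl.
set K := hcontent_ratio a b (r * (d%:R + 1)).
have K0 : 0 < K := hcontent_ratio_gt0 a0 ab rd0.
have [V [oV [hV cV]]] := qcf (e / K) (divr_gt0 e0 K0).
exists (V `&` ball x r); split; first exact: openI oV (ball_open _ _).
split.
  apply: le_lt_trans (@hcontent_le_ratio _ _ _ _ a0 ab _ x _ rd0 _) _.
    by move=> y [_ yx]; exact (ball_sub_eball r0 yx).
  rewrite -lte_pdivlMl// -EFinM mulrC.
  by apply: le_lt_trans hV; apply: le_hcontent => y [].
have -> : D `\` (V `&` ball x r) = D `\` V.
  apply/seteqP; split => y [Dy nV]; split => //.
  - by move=> Vy; apply: nV; split; last exact: Dx.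
  - by case=> Vy _; apply: nV.
exact cV.
Qed.

Lemma L1H_le_dim (D : set pt) (f : pt -> R) x r : 0 < r -> D `<=` ball x r ->
  L1H a D f -> L1H b D f.
Proof.
move=> r0 Dx [qcf finf]; split; first exact: quasicont_le_dim Dx qcf.
have rd0 : 0 < r * (d%:R + 1) by rewrite mulr_gt0 ?ltr_wpDl.
have DB : D `<=` eball x (r * (d%:R + 1)).
  by move=> y /Dx yx; exact (ball_sub_eball r0 yx).
apply: le_lt_trans (choquet_le_ratio _ a0 ab rd0 DB) _.
have K0 := hcontent_ratio_gt0 a0 ab rd0.
by apply: lte_mul_pinfty; rewrite ?lee_fin ?(ltW K0).
Qed.

Let rho : R := 2 * (d%:R + 1).

Lemma choquet_cube_le (x : pt) (l : R) (f : pt -> R) : 0 < l ->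
  ((l `^ (- b))%:E * choquet b (cube x l) f <=
   (hcontent_ratio a b rho)%:E * ((l `^ (- a))%:E * choquet a (cube x l) f))%E.
Proof.
move=> l0; have rho0 : 0 < rho by rewrite mulr_gt0 ?ltr_wpDl.
have lrho0 : 0 < l * rho by rewrite mulr_gt0.
apply: le_trans (_ : (l `^ (- b))%:E * ((hcontent_ratio a b (l * rho))%:E *
                      choquet a (cube x l) f) <= _)%E.
  rewrite lee_wpmul2l ?lee_fin ?powR_ge0//.
  exact: choquet_le_ratio lrho0 (cube_sub_eball l0).
have powRN_mul : l `^ (- b) * l `^ (b - a) = l `^ (- a).
  by rewrite -powRD ?lt0r_neq0 ?implybT// addrA addNr add0r.
rewrite hcontent_ratioM ?(ltW l0) ?(ltW rho0)// muleA -EFinM mulrA powRN_mul.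
by rewrite mulrC EFinM -muleA.
Qed.

Lemma bmo_norm_le_dim (Q0 : set pt) (u : pt -> R) :
  (bmo_norm b Q0 u <= (hcontent_ratio a b rho)%:E * bmo_norm a Q0 u)%E.
Proof.
have K0 : 0 < hcontent_ratio a b rho by rewrite hcontent_ratio_gt0 ?mulr_gt0 ?ltr_wpDl.
apply: ge_ereal_sup => _ [x [l [l0 [sub ->]]]].
set osc := fun g c : R => ((l `^ (- g))%:E * choquet g (cube x l) (fun y => `|u y - c|%R))%E.
apply: le_trans (_ : (hcontent_ratio a b rho)%:E * ereal_inf [set osc a c | c in setT] <= _)%E.
  rewrite -lee_pdivrMl//; apply: le_ereal_inf_tmp => _ [c _ <-].
  rewrite lee_pdivrMl//; apply: le_trans (choquet_cube_le x (fun y => `|u y - c|) l0).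
  by apply: ereal_inf_lbound; exists c.
rewrite lee_wpmul2l ?lee_fin ?(ltW K0)//; apply: ereal_sup_ubound.
exists x, l; split => //; split => //; congr ereal_inf.
by apply/seteqP; split => v [c]; [move=> _ <-|move=> ->]; exists c.
Qed.

End BMOEmbedding.

Theorem corollary1p6 (R : realType) (d : nat) (alpha beta : R) :
  0 < alpha -> alpha <= beta -> beta <= d%:R ->
  exists C : R, 0 < C /\
    forall (a : 'rV[R]_d) (l : R), 0 < l ->
    forall u : 'rV[R]_d -> R,
      BMO alpha (cube a l) u ->
      BMO beta (cube a l) u /\
      (bmo_norm beta (cube a l) u <= C%:E * bmo_norm alpha (cube a l) u)%E.
Proof.
move=> a0 ab _.
set C := hcontent_ratio alpha beta (2 * (d%:R + 1)).
have C0 : 0 < C by apply: hcontent_ratio_gt0 => //; rewrite mulr_gt0 ?ltr_wpDl.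
exists C; split; first exact: C0.
move=> x l l0 u [L1u bmo_fin].
have norm_le : (bmo_norm beta (cube x l) u <= C%:E * bmo_norm alpha (cube x l) u)%E.
  exact: bmo_norm_le_dim.
split; last exact: norm_le.
split.
- have l2 : 0 < 2 * l by rewrite mulr_gt0.
  exact (L1H_le_dim a0 ab l2 (cube_sub_ball l0) L1u).
- apply: le_lt_trans norm_le _.
  by apply: lte_mul_pinfty; rewrite ?lee_fin ?(ltW C0).
Qed.
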